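(* Let $\mathcal{T}$ be a finite or countably infinite set, let $\prec$ be a strict total order on $\mathcal{T}$, and let $\mathbf{p} \ne \mathbf{q}$ be two probability distributions on $\mathcal{T}$. For a positive integer $m$, let $X_0 \sim \mathbf{q}$, $X_1,\dots,X_m \sim^{\mathrm{iid}} \mathbf{p}$, $U_0,\dots,U_m \sim^{\mathrm{iid}} \mathrm{Uniform}(0,1)$ be mutually independent, and let $R = \sum_{j=1}^m \big(\mathbb{I}[X_j \prec X_0] + \mathbb{I}[X_j = X_0, U_j < U_0]\big)$. Then there is some $M \ge 1$ such that, for $m = M$, $R$ is not uniformly distributed on $\{0,1,\dots,M\}$.
   Context: $\mathbb{I}[\cdot]$ denotes the indicator of an event; $R$ depends on $m$. *)

From HB Require Import structures.
From mathcomp Require Import all_boot all_order all_algebra.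
From mathcomp Require Import all_classical all_reals all_analysis.
Set Implicit Arguments. Unset Strict Implicit. Unset Printing Implicit Defensive.
Import Order.TTheory GRing.Theory Num.Theory.
Local Open Scope classical_set_scope.
Local Open Scope ring_scope.

Definition strict_total_order (T : eqType) (lt : rel T) : Prop :=
  [/\ (forall x, ~~ lt x x),
      (forall x y z, lt x y -> lt y z -> lt x z) &
      (forall x y, [|| lt x y, x == y | lt y x])].

Definition is_pmf (R : realType) (T : countType) (p : T -> R) : Prop :=
  (forall x, 0 <= p x) /\ (\esum_(x in [set: T]) (p x)%:E = 1)%E.

Definition has_pmf_law (d : measure_display) (Omega : measurableType d)
  (R : realType) (P : probability Omega R) (T : countType)
  (X : Omega -> T) (p : T -> R) : Prop :=
  forall A : set T, P (X @^-1` A) = (\esum_(x in A) (p x)%:E)%E.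

Definition is_uniform01 (d : measure_display) (Omega : measurableType d)
  (R : realType) (P : probability Omega R) (U : Omega -> R) : Prop :=
  forall B : set R, measurable B ->
    P (U @^-1` B) = (@lebesgue_measure R) (B `&` `[0, 1]).

Definition mutually_independent (d : measure_display) (Omega : measurableType d)
  (R : realType) (P : probability Omega R) (T : countType)
  (m : nat) (X : nat -> Omega -> T) (U : nat -> Omega -> R) : Prop :=
  forall (A : nat -> set T) (B : nat -> set R), (forall i, measurable (B i)) ->
    P (\bigcap_(i in [set i | (i <= m)%N]) (X i @^-1` A i `&` U i @^-1` B i)) =
    (\prod_(i < m.+1) (P (X i @^-1` A i) * P (U i @^-1` B i)))%E.

Definition rank_stat (Omega : Type) (R : realType) (T : countType) (lt : rel T)
  (m : nat) (X : nat -> Omega -> T) (U : nat -> Omega -> R) (w : Omega) : nat :=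
  \sum_(1 <= j < m.+1)
    (lt (X j w) (X 0%N w) + ((X j w == X 0%N w) && (U j w < U 0%N w)%R))%N.

From HB Require Import structures.
From mathcomp Require Import all_boot all_order all_algebra.
From mathcomp Require Import all_classical all_reals all_analysis.
From mathcomp Require Import measurable_realfun.
From mathcomp.algebra_tactics Require Import ring lra.
From mathcomp Require Import zify.
Set Implicit Arguments. Unset Strict Implicit. Unset Printing Implicit Defensive.
Import Order.TTheory GRing.Theory Num.Theory.
Local Open Scope classical_set_scope.
Local Open Scope ring_scope.

(* Pick x0 with p x0 < q x0 and put e := q x0 - p x0.  Classify X_1, ..., X_M
   as below, at or above x0.  On {X_0 = x0} the rank lies between the number of
   X_j below x0 and the number of X_j not above x0; these are binomial counts
   with means M a and M (a + p x0), where a is the p-mass below x0, and by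
   Chebyshev both are within M e / 4 of their means outside an event of
   probability at most 32 / (M e^2).  So, with
   probability at least about q x0, the rank falls in a window of about
   M (p x0 + e / 2) + 1 values, which a uniform rank only hits with probability
   about p x0 + e / 2 = q x0 - e / 2.  This is contradictory once M e is large. *)

Lemma pmf_neq_exists_lt (R : realType) (T : countType) (p q : T -> R) :
  is_pmf p -> is_pmf q -> p <> q -> exists x, p x < q x.
Proof.
move=> [p_ge0 p_sum1] [q_ge0 q_sum1] pq; apply: contrapT => no_lt.
have q_le_p x : q x <= p x by rewrite leNgt; apply/negP => ?; apply: no_lt; exists x.
have [x1 qp_lt] : exists x1, q x1 < p x1.
  apply: contrapT => no_gt; apply: pq; apply: funext => x.
  by apply/eqP; rewrite eq_le q_le_p andbT leNgt; apply/negP => ?; apply: no_gt; exists x.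
have p_split : (\esum_(x in [set: T]) (p x)%:E =
    \esum_(x in [set: T]) (q x)%:E + \esum_(x in [set: T]) (p x - q x)%:E)%E.
  rewrite -esumD => [|x _|x _]; rewrite ?lee_fin ?subr_ge0 //.
  by apply: eq_esum => x _; rewrite -EFinD addrC subrK.
have : ((p x1 - q x1)%:E <= \esum_(x in [set: T]) (p x - q x)%:E)%E.
  apply: esum_ge; exists [set x1]; first by split => //; exact: finite_set1.
  by rewrite fsbig_set1.
move: p_split; rewrite p_sum1 q_sum1; case: (\esum_(x in _) _)%E => // r /esym/eqP.
rewrite -EFinD eqe lee_fin => /eqP r0.
by move: qp_lt; rewrite -subr_gt0; lra.
Qed.

Section ProductWeights.
Variables (R : realDomainType) (I : finType) (M : nat) (w : I -> R).

Lemma sum_ffun_prod : \sum_(s : {ffun 'I_M -> I}) \prod_j w (s j) = (\sum_t w t) ^+ M.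
Proof.
by rewrite -(bigA_distr_bigA (fun (_ : 'I_M) t => w t)) prodr_const card_ord.
Qed.

Lemma sum_ffun_prod_sqr_sum (h : I -> R) :
  \sum_t w t = 1 -> \sum_t w t * h t = 0 ->
  \sum_(s : {ffun 'I_M -> I}) (\prod_j w (s j)) * (\sum_j h (s j)) ^+ 2
  = M%:R * \sum_t w t * h t ^+ 2.
Proof.
move=> w_sum1 wh_sum0.
pose g (j k : 'I_M) i t := w t * (if i == j then h t else 1) * (if i == k then h t else 1).
have expand s : (\prod_j w (s j)) * (\sum_j h (s j)) ^+ 2 =
    \sum_j \sum_k \prod_i g j k i (s i).
  rewrite expr2 mulr_suml mulr_sumr; apply: eq_bigr => j _.
  rewrite mulrA mulr_sumr; apply: eq_bigr => k _.
  by rewrite !big_split /= -!big_mkcond !big_pred1_eq; ring.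
have cross j k : \sum_(s : {ffun 'I_M -> I}) \prod_i g j k i (s i) =
    if k == j then \sum_t w t * h t ^+ 2 else 0.
  rewrite -(bigA_distr_bigA (g j k)) (bigD1 j) //= /g eqxx.
  case: (eqVneq k j) => [->|kj]; rewrite ?eqxx ?(negPf kj).
    rewrite [X in _ * X]big1 ?mulr1 => [|i /negPf ->]; last first.
      by under eq_bigr do rewrite !mulr1.
    by under [RHS]eq_bigr do rewrite expr2 mulrA.
  by under eq_bigr do rewrite mulr1; rewrite wh_sum0 mul0r.
under eq_bigr do rewrite expand.
rewrite exchange_big; under eq_bigr => j _ do rewrite exchange_big.
under eq_bigr => j _ do under eq_bigr => k _ do rewrite /= cross.
under eq_bigr => j _ do rewrite -big_mkcond big_pred1_eq.
by rewrite sumr_const card_ord mulr_natl.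
Qed.

Lemma chebyshev_ffun_prod (h : I -> R) (E : pred {ffun 'I_M -> I}) (D : R) :
  (forall t, 0 <= w t) -> \sum_t w t = 1 -> \sum_t w t * h t = 0 ->
  (forall s, E s -> D ^+ 2 <= (\sum_j h (s j)) ^+ 2) ->
  (\sum_(s | E s) \prod_j w (s j)) * D ^+ 2 <= M%:R * \sum_t w t * h t ^+ 2.
Proof.
move=> w_ge0 w_sum1 wh_sum0 E_dev.
have prod_ge0 s : 0 <= \prod_j w (s j) by apply: prodr_ge0.
rewrite -sum_ffun_prod_sqr_sum // mulr_suml [leRHS](bigID E) /= -[leLHS]addr0.
apply: lerD; last by apply: sumr_ge0 => s _; rewrite mulr_ge0 ?sqr_ge0.
by apply: ler_sum => s /E_dev; apply: ler_wpM2l.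
Qed.

End ProductWeights.

Lemma measure_big_setU_fin d (T : measurableType d) (R : realType)
    (mu : {measure set T -> \bar R}) (I : finType) (E : pred I) (F : I -> set T) :
  (forall i, measurable (F i)) -> trivIset setT F ->
  mu (\big[setU/set0]_(i | E i) F i) = (\sum_(i | E i) mu (F i))%E.
Proof.
move=> F_meas F_triv.
have val_bij : {on [pred i | E i], bijective (@enum_val I predT)}.
  by apply: onW_bij; exact: enum_val_bij.
rewrite !(reindex _ val_bij) measure_bigsetU_ord // => i j _ _.
by move=> /(F_triv _ _ Logic.I Logic.I) /enum_val_inj.
Qed.

Section LevelMeasurable.
Variables (d : measure_display) (Omega : measurableType d).

Definition level_measurable (f : Omega -> nat) := forall k, measurable [set w | f w = k].

Lemma level_measurable_bool (b : Omega -> bool) :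
  measurable [set w | b w] -> level_measurable (fun w => nat_of_bool (b w)).
Proof.
move=> b_meas [|[|k]].
- rewrite (_ : [set w | _] = ~` [set w | b w]); first exact: measurableC.
  by apply/seteqP; split => w /=; case: (b w).
- by rewrite (_ : [set w | _] = [set w | b w]) //; apply/seteqP; split => w /=; case: (b w).
- by rewrite (_ : [set w | _] = set0) //; apply/seteqP; split => w /=; case: (b w).
Qed.

Lemma level_measurable_add (f g : Omega -> nat) :
  level_measurable f -> level_measurable g -> level_measurable (fun w => f w + g w)%N.
Proof.
move=> f_meas g_meas k.
rewrite (_ : [set w | _] = \bigcup_(v in [set v | v < k.+1]%N)
                             ([set w | f w = k - v]%N `&` [set w | g w = v])).
  by apply: bigcup_measurable => v _; apply: measurableI.
apply/seteqP; split => w /=.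
  by move=> <-; exists (g w); rewrite /= ?addnK // ltnS leq_addl.
by move=> [v v_le [/= fw gw]]; rewrite fw gw subnK // -ltnS.
Qed.

Lemma level_measurable_sum (J : eqType) (r : seq J) (f : J -> Omega -> nat) :
  {in r, forall j, level_measurable (f j)} ->
  level_measurable (fun w => \sum_(j <- r) f j w)%N.
Proof.
elim: r => [_ k|j r IHr f_meas].
  under eq_set do rewrite big_nil.
  case: k => [|k]; first by rewrite (_ : [set _ | _] = setT) //; apply/seteqP.
  by rewrite (_ : [set _ | _] = set0) //; apply/seteqP; split.
move=> k; under eq_set do rewrite big_cons; move: k.
apply: level_measurable_add; first by apply: f_meas; rewrite mem_head.
by apply: IHr => i ir; apply: f_meas; rewrite in_cons ir orbT.
Qed.

Lemma measurable_rel (T : countType) (r : rel T) (X Y : Omega -> T) :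
  (forall A, measurable (X @^-1` A)) -> (forall A, measurable (Y @^-1` A)) ->
  measurable [set w | r (X w) (Y w)].
Proof.
move=> X_meas Y_meas.
rewrite (_ : [set w | _] = \bigcup_(y : T) (Y @^-1` [set y] `&` X @^-1` [set x | r x y])).
  by apply: countable_bigcupT_measurable => // y; apply: measurableI.
by apply/seteqP; split => [w ?|w [y _ /= [-> ?]]] //; exists (Y w).
Qed.

End LevelMeasurable.

Lemma level_measurable_rank_stat d (Omega : measurableType d) (R : realType)
    (T : countType) (lt : rel T) (M : nat) (X : nat -> Omega -> T) (U : nat -> Omega -> R) :
  (forall i, (i <= M)%N -> forall A : set T, measurable (X i @^-1` A)) ->
  (forall i, (i <= M)%N -> measurable_fun setT (U i)) ->
  level_measurable (rank_stat lt M X U).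
Proof.
move=> X_meas U_meas; apply: level_measurable_sum => j.
rewrite mem_index_iota => /andP[_ jM]; have X0_meas := X_meas 0%N (leq0n M).
apply: level_measurable_add; apply: level_measurable_bool.
  exact: measurable_rel (X_meas j jM) X0_meas.
rewrite (_ : [set w | _] = [set w | X j w == X 0%N w] `&` [set w | U j w < U 0%N w]);
  last by apply/seteqP; split => w /andP.
apply: measurableI; first exact: measurable_rel (X_meas j jM) X0_meas.
have := measurable_fun_ltr (U_meas j jM) (U_meas 0%N (leq0n M)) measurableT.
by move=> /(_ [set true] I); rewrite setTI.
Qed.

Section ClassEvents.
Variables (R : realType) (T : countType) (I : finType) (cls : T -> I).
Variables (d : measure_display) (Omega : measurableType d) (P : probability Omega R).

Definition class_weight (p : T -> R) (t : I) : R :=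
  fine (\esum_(y in cls @^-1` [set t]) (p y)%:E)%E.

Section ClassWeight.
Variables (p : T -> R) (Y : Omega -> T).
Hypothesis Y_meas : forall A, measurable (Y @^-1` A).
Hypothesis Y_law : has_pmf_law P Y p.

Lemma class_weightE t : (class_weight p t)%:E = P (Y @^-1` (cls @^-1` [set t])).
Proof. by rewrite /class_weight -Y_law fineK //; apply: fin_num_measure. Qed.

Lemma class_weight_ge0 t : 0 <= class_weight p t.
Proof. by rewrite -lee_fin class_weightE measure_ge0. Qed.

Lemma class_weight_sum1 : \sum_t class_weight p t = 1.
Proof.
apply: EFin_inj; rewrite -sumEFin; under eq_bigr do rewrite class_weightE.
rewrite -measure_big_setU_fin // => [|t t' _ _ [w [/= <- <-]] //].
rewrite -(probability_setT P); congr (P _); apply/seteqP; split => // w _.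
by rewrite -bigcup_seq; exists (cls (Y w)); rewrite /= ?mem_index_enum.
Qed.

End ClassWeight.

Variables (x0 : T) (M : nat) (X : nat -> Omega -> T) (U : nat -> Omega -> R) (p q : T -> R).
Hypothesis X_meas : forall i, (i <= M)%N -> forall A : set T, measurable (X i @^-1` A).

Definition class_event (s : {ffun 'I_M -> I}) : set Omega :=
  [set w | X 0%N w = x0 /\ forall j : 'I_M, cls (X j.+1 w) = s j].

Let class_constraint (s : {ffun 'I_M -> I}) (i : nat) : set T :=
  if i is j.+1 then if insub j is Some o then cls @^-1` [set s o] else setT else [set x0].

Let class_event_bigcap s : class_event s =
  \bigcap_(i in [set i | i <= M]%N) (X i @^-1` class_constraint s i `&` U i @^-1` setT).
Proof.
apply/seteqP; split => w /=.
  by move=> [X0w Xjw] [|i] /= iM; split; rewrite // insubT; exact: (Xjw (Ordinal iM)).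
move=> Xw; split; first by have [] := Xw 0%N (leq0n M).
by move=> j; have [] := Xw j.+1 (ltn_ord j); rewrite /= valK.
Qed.

Lemma class_event_measurable s : measurable (class_event s).
Proof.
rewrite (_ : class_event s = X 0%N @^-1` [set x0] `&`
                             \bigcap_(j in [set: 'I_M]) X j.+1 @^-1` (cls @^-1` [set s j])).
  apply: measurableI; first exact: X_meas.
  by apply: fin_bigcap_measurable => [|j _]; [exact: finite_finset | exact: X_meas].
apply/seteqP; split=> w [X0w Xjw]; split=> // j; first by move=> _; exact: Xjw.
exact: Xjw j Logic.I.
Qed.

Lemma class_event_trivIset : trivIset setT class_event.
Proof.
move=> s s' _ _ [w [[_ sw] [_ s'w]]].
by apply/ffunP => j; rewrite -sw s'w.
Qed.

Hypothesis q_ge0 : forall x, 0 <= q x.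
Hypothesis X0_law : has_pmf_law P (X 0%N) q.
Hypothesis Xj_law : forall j, (1 <= j <= M)%N -> has_pmf_law P (X j) p.
Hypothesis indep : mutually_independent P M X U.

Lemma probability_class_event s :
  P (class_event s) = (q x0 * \prod_j class_weight p (s j))%:E.
Proof.
rewrite class_event_bigcap indep // big_ord_recl /= preimage_setT probability_setT.
rewrite mule1 X0_law esum_set1 ?lee_fin // EFinM -prodEFin; congr (_ * _)%E.
apply: eq_bigr => j _; rewrite mule1 /bump leq0n add1n add0n valK.
by rewrite (class_weightE (X_meas (ltn_ord j)) (@Xj_law j.+1 (ltn_ord j))).
Qed.

End ClassEvents.

Definition sideL : 'I_3 := @Ordinal 3 0 isT.
Definition sideE : 'I_3 := @Ordinal 3 1 isT.
Definition sideG : 'I_3 := @Ordinal 3 2 isT.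

Lemma big_ord3 (V : zmodType) (f : 'I_3 -> V) : \sum_t f t = f sideL + f sideE + f sideG.
Proof.
rewrite !big_ord_recr big_ord0 /= add0r.
by congr (f _ + f _ + f _); apply: val_inj.
Qed.

Section Side.
Variables (T : countType) (lt : rel T) (x0 : T).
Hypothesis lt_irr : forall x, ~~ lt x x.

Definition side (y : T) : 'I_3 := if lt y x0 then sideL else if y == x0 then sideE else sideG.

Lemma side_preimage_sideE : side @^-1` [set sideE] = [set x0].
Proof.
apply/seteqP; split => y /=; last by move=> ->; rewrite /side (negPf (lt_irr x0)) eqxx.
by rewrite /side; case: ifP => // _; case: eqP.
Qed.

Lemma rank_term_bounds y (b : bool) :
  ((side y == sideL) <= lt y x0 + ((y == x0) && b) <= (side y != sideG))%N.
Proof.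
rewrite /side; case: (boolP (lt y x0)) => [lt_y|_]; last by case: (y == x0); case: b.
suff -> : (y == x0) = false by [].
by apply: contraTF lt_y => /eqP ->; exact: lt_irr.
Qed.

Lemma rank_stat_class_event d (Omega : measurableType d) (R : realType)
    (M : nat) (X : nat -> Omega -> T) (U : nat -> Omega -> R) (s : {ffun 'I_M -> 'I_3}) w :
  class_event side x0 X s w ->
  ((\sum_j (s j == sideL)) <= rank_stat lt M X U w <= \sum_j (s j != sideG))%N.
Proof.
move=> [X0w Xjw]; rewrite /rank_stat big_add1 /= big_mkord.
by apply/andP; split; apply: leq_sum => j _; rewrite X0w -Xjw;
  have /andP[] := rank_term_bounds (X j.+1 w) (U j.+1 w < U 0%N w).
Qed.

End Side.

Lemma sum_ord_itv n c1 c2 : (\sum_(k < n | c1 <= k <= c2) 1 = minn n c2.+1 - c1)%N.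
Proof.
rewrite -(big_mkord (fun k => c1 <= k <= c2)%N (fun _ => 1%N)).
elim: n => [|n IHn]; first by rewrite big_geq // min0n.
rewrite big_mkcond big_nat_recr //= -big_mkcond IHn.
by case: ifP => /andP; lia.
Qed.

Lemma card_window_le (R : archiRealFieldType) n (x y : R) : x <= y -> 0 <= y ->
  (\sum_(k < n | (x < k%:R <= y)%R) 1)%N%:R <= y - x + 1.
Proof.
(* truncn (x + 1) is the least natural number above x, also when x < 0. *)
move=> le_xy y_ge0; set c1 := Num.truncn (x + 1); set c2 := Num.truncn y.
rewrite (eq_bigl (fun k : 'I_n => c1 <= k <= c2)%N) => [|k]; last first.
  by rewrite truncn_le_nat truncn_ge_nat // -natr1 ltrD2r.
rewrite sum_ord_itv.
have c1_gt : x < c1%:R by rewrite -(ltrD2r 1) natr1 -truncn_le_nat.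
have c2_le : c2%:R <= y by rewrite truncn_le.
have [c1_le|c1_gt'] := leqP c1 c2.+1.
  apply: (@le_trans _ _ (c2.+1 - c1)%N%:R); first by rewrite ler_nat leq_sub2r ?geq_minr.
  rewrite natrB // -natr1; lra.
have -> : (minn n c2.+1 - c1 = 0)%N by lia.
by rewrite /=; lra.
Qed.

(* m is the sample size, S and B1, B2 the masses of the central and of the two
   tail events, and c the number of ranks in the window; 128 = 4 * 2 * 16 comes
   from the two Chebyshev bounds B_i <= 16 / (m e^2). *)
Lemma rank_window_sample_bound (R : realFieldType) (m q0 e S B1 B2 c : R) :
  0 < e -> 0 <= q0 <= 1 -> 1 <= m -> 0 <= B1 -> 0 <= B2 -> 1 <= S + B1 + B2 ->
  B1 * (m * (e / 4)) ^+ 2 <= m -> B2 * (m * (e / 4)) ^+ 2 <= m ->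
  q0 * S * (m + 1) <= c -> c <= m * (q0 - e / 2) + 1 ->
  m <= (2 + 128 / e ^+ 2) / e.
Proof.
move=> e_gt0 /andP[q0_ge0 q0_le1] m_ge1 B1_ge0 B2_ge0 S_ge B1_le B2_le c_ge c_le.
have tail_bound B : B * (m * (e / 4)) ^+ 2 <= m -> B * m * e ^+ 2 <= 16.
  move=> B_le; rewrite -(ler_pM2r (_ : 0 < m)); last lra.
  by move: B_le; rewrite !exprMn; nra.
have {}B1_le := tail_bound _ B1_le; have {}B2_le := tail_bound _ B2_le.
have S_lb : q0 - (B1 + B2) <= q0 * S by nra.
have me_le : m * e <= 2 + 4 * (B1 + B2) * m by nra.
have e2_gt0 : 0 < e ^+ 2 by rewrite exprn_gt0.
rewrite ler_pdivlMr // -(ler_pM2r e2_gt0) mulrDl divfK ?gt_eqF //; nra.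
Qed.

Section UniformRank.
Variables (R : realType) (T : countType) (lt : rel T) (x0 : T).
Variables (d : measure_display) (Omega : measurableType d) (P : probability Omega R).
Variables (M : nat) (X : nat -> Omega -> T) (U : nat -> Omega -> R) (p q : T -> R).
Hypothesis lt_irr : forall x, ~~ lt x x.
Hypothesis p_ge0 : forall x, 0 <= p x.
Hypothesis q_ge0 : forall x, 0 <= q x.
Hypothesis M_gt0 : (0 < M)%N.
Hypothesis X_meas : forall i, (i <= M)%N -> forall A : set T, measurable (X i @^-1` A).
Hypothesis U_meas : forall i, (i <= M)%N -> measurable_fun setT (U i).
Hypothesis X0_law : has_pmf_law P (X 0%N) q.
Hypothesis Xj_law : forall j, (1 <= j <= M)%N -> has_pmf_law P (X j) p.
Hypothesis indep : mutually_independent P M X U.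
Hypothesis p_lt_q : p x0 < q x0.
Hypothesis rank_uniform : forall k, (k <= M)%N ->
  P [set w | rank_stat lt M X U w = k] = ((M.+1)%:R^-1)%:E.

Local Notation w := (class_weight (side lt x0) p).
Local Notation e := (q x0 - p x0).
Local Notation lo := (M%:R * (w sideL - e / 4)).
Local Notation hi := (M%:R * (w sideL + w sideE + e / 4)).
Let in_window (k : nat) := lo < k%:R <= hi.
Let n_below (s : {ffun 'I_M -> 'I_3}) := (\sum_j (s j == sideL))%N.
Let n_not_above (s : {ffun 'I_M -> 'I_3}) := (\sum_j (s j != sideG))%N.
Let central (s : {ffun 'I_M -> 'I_3}) := (lo < (n_below s)%:R) && ((n_not_above s)%:R <= hi).
Let mass (E : pred {ffun 'I_M -> 'I_3}) := \sum_(s | E s) \prod_j w (s j).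
Let n_window := (\sum_(k < M.+1 | in_window k) 1)%N.

Let XM_law : has_pmf_law P (X M) p.
Proof. by apply: Xj_law; rewrite M_gt0 leqnn. Qed.

Let w_ge0 t : 0 <= w t.
Proof. exact (class_weight_ge0 (side lt x0) (X_meas (leqnn M)) XM_law t). Qed.

Let w_sum1 : \sum_t w t = 1.
Proof. exact (class_weight_sum1 (side lt x0) (X_meas (leqnn M)) XM_law). Qed.

Let w_sideE : w sideE = p x0.
Proof. by rewrite /class_weight (side_preimage_sideE _ lt_irr) esum_set1 ?lee_fin. Qed.

Let q_le1 : q x0 <= 1.
Proof.
rewrite -lee_fin -(esum_set1 (a := fun x => (q x)%:E)) ?lee_fin // -X0_law.
exact/probability_le1/X_meas.
Qed.

Let e_gt0 : 0 < e.
Proof. by rewrite subr_gt0. Qed.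

Lemma central_events_sub_window :
  \big[setU/set0]_(s | central s) class_event (side lt x0) x0 X s `<=`
  \big[setU/set0]_(k < M.+1 | in_window k) [set w | rank_stat lt M X U w = k].
Proof.
rewrite -!bigcup_seq_cond => o [s /= /andP[_ /andP[lo_lt le_hi]] o_s].
have /andP[below_le le_not_above] := rank_stat_class_event lt_irr U o_s.
have rank_lt : (rank_stat lt M X U o < M.+1)%N.
  rewrite ltnS (leq_trans le_not_above) // -[leqRHS]card_ord -sum1_card.
  by apply: leq_sum => j _; exact: leq_b1.
exists (Ordinal rank_lt) => //=; rewrite mem_index_enum /in_window /=.
by rewrite (lt_le_trans lo_lt) ?(le_trans _ le_hi) ?ler_nat.
Qed.

Lemma probability_central_events :
  P (\big[setU/set0]_(s | central s) class_event (side lt x0) x0 X s) =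
  (q x0 * mass central)%:E.
Proof.
rewrite measure_big_setU_fin.
- rewrite (eq_bigr _ (fun s _ =>
    probability_class_event (side lt x0) x0 X_meas q_ge0 X0_law Xj_law indep s)).
  by rewrite sumEFin mulr_sumr.
- by move=> s; exact (class_event_measurable (side lt x0) x0 X_meas s).
- exact: class_event_trivIset.
Qed.

Lemma probability_window :
  P (\big[setU/set0]_(k < M.+1 | in_window k) [set w | rank_stat lt M X U w = k]) =
  (n_window%:R / (M.+1)%:R)%:E.
Proof.
rewrite measure_bigsetU_ord_cond => [|k _|k l _ _ [v [/= kv lv]]].
- rewrite (eq_bigr _ (fun (k : 'I_M.+1) _ => rank_uniform (ltn_ord k))) sumEFin.
  by rewrite natr_sum mulr_suml; congr _%:E; apply: eq_bigr => k _; rewrite mul1r.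
- exact: level_measurable_rank_stat.
- by apply: ord_inj; rewrite -kv -lv.
Qed.

Lemma central_mass_le : q x0 * mass central * (M.+1)%:R <= n_window%:R.
Proof.
rewrite -ler_pdivlMr // -lee_fin -probability_central_events -probability_window.
apply: le_measure; rewrite ?inE; last exact: central_events_sub_window.
- by apply: bigsetU_measurable => s _; exact (class_event_measurable (side lt x0) x0 X_meas s).
- by apply: bigsetU_measurable => k _; exact: level_measurable_rank_stat.
Qed.

Let far_below (s : {ffun 'I_M -> 'I_3}) := ~~ (lo < (n_below s)%:R).
Let far_above (s : {ffun 'I_M -> 'I_3}) := ~~ ((n_not_above s)%:R <= hi).

Let mass_ge0 E : 0 <= mass E.
Proof. by apply: sumr_ge0 => s _; apply: prodr_ge0. Qed.

Let tail_bound (c : pred 'I_3) (z : R) (E : pred {ffun 'I_M -> 'I_3}) :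
  \sum_t w t * (c t)%:R = z -> 0 <= z <= 1 ->
  (forall s, E s -> (M%:R * (e / 4)) ^+ 2 <= ((\sum_j c (s j))%N%:R - M%:R * z) ^+ 2) ->
  mass E * (M%:R * (e / 4)) ^+ 2 <= M%:R.
Proof.
move=> wc_z /andP[z_ge0 z_le1] E_dev; pose h t := (c t)%:R - z.
apply: le_trans (chebyshev_ffun_prod (h := h) (E := E) w_ge0 w_sum1 _ _) _.
- by under eq_bigr do rewrite mulrBr; rewrite sumrB wc_z -big_distrl /= w_sum1 mul1r subrr.
- by move=> s /E_dev; rewrite sumrB natr_sum sumr_const card_ord -[z *+ M]mulr_natl.
rewrite -[leRHS]mulr1 ler_wpM2l // -w_sum1; apply: ler_sum => t _.
by rewrite ler_piMr // /h; case: (c t) => /=; nra.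
Qed.

Let w_sideL_le1 : 0 <= w sideL <= 1.
Proof.
rewrite w_ge0 /=; have := w_sum1; rewrite big_ord3.
by have := w_ge0 sideE; have := w_ge0 sideG; lra.
Qed.

Let tail_gap_ge0 : 0 <= M%:R * (e / 4).
Proof. by rewrite mulr_ge0 ?ler0n ?divr_ge0 ?ltW. Qed.

Lemma far_below_mass : mass far_below * (M%:R * (e / 4)) ^+ 2 <= M%:R.
Proof.
apply: (tail_bound (c := fun t => t == sideL) (z := w sideL)) => [|//|s].
  by rewrite big_ord3 /=; ring.
rewrite /far_below /n_below -leNgt => le_lo.
have dev : M%:R * (e / 4) <= M%:R * w sideL - (\sum_j (s j == sideL))%N%:R.
  by move: le_lo; rewrite mulrBr; lra.
by rewrite -[leRHS]sqrrN opprB ler_sqr ?nnegrE ?tail_gap_ge0 ?(le_trans tail_gap_ge0 dev).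
Qed.

Lemma far_above_mass : mass far_above * (M%:R * (e / 4)) ^+ 2 <= M%:R.
Proof.
apply: (tail_bound (c := fun t => t != sideG) (z := w sideL + w sideE)) => [||s].
- by rewrite big_ord3 /=; ring.
- have := w_sum1; rewrite big_ord3 addr_ge0 ?w_ge0 //=.
  by have := w_ge0 sideG; lra.
rewrite /far_above /n_not_above -ltNge => hi_lt.
have dev : M%:R * (e / 4) <= (\sum_j (s j != sideG))%N%:R - M%:R * (w sideL + w sideE).
  by move: hi_lt; rewrite !mulrDr; lra.
by rewrite ler_sqr ?nnegrE ?tail_gap_ge0 ?(le_trans tail_gap_ge0 dev).
Qed.

Lemma mass_cover : 1 <= mass central + mass far_below + mass far_above.
Proof.
apply: (@le_trans _ _ (\sum_(s : {ffun 'I_M -> 'I_3}) \prod_j w (s j))).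
  by rewrite sum_ffun_prod w_sum1 expr1n.
rewrite [leLHS](bigID central) /= -addrA lerD2l /mass.
rewrite big_mkcond [X in _ <= X + _]big_mkcond [X in _ <= _ + X]big_mkcond -big_split /=.
apply: ler_sum => s _; have : 0 <= \prod_j w (s j) by apply: prodr_ge0.
by rewrite /central /far_below /far_above; case: (lo < _); case: (_ <= hi) => /=; lra.
Qed.

Lemma n_window_le : n_window%:R <= M%:R * (q x0 - e / 2) + 1.
Proof.
have wL := w_ge0 sideL; have wE := w_ge0 sideE; have e0 := e_gt0.
apply: le_trans (card_window_le _ _ _) _.
- by rewrite ler_wpM2l //; lra.
- by rewrite mulr_ge0 //; lra.
- by rewrite w_sideE; lra.
Qed.

Lemma uniform_rank_sample_bound : M%:R <= (2 + 128 / e ^+ 2) / e.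
Proof.
apply: (rank_window_sample_bound (q0 := q x0) (c := n_window%:R) _ _ _ _ _
          mass_cover far_below_mass far_above_mass) => //.
- by rewrite q_ge0 q_le1.
- by rewrite ler1n.
- by rewrite natr1; exact: central_mass_le.
- exact: n_window_le.
Qed.

End UniformRank.

Theorem corollary3p3 (R : realType) (T : countType) (lt : rel T)
  (p q : T -> R) :
  strict_total_order lt -> is_pmf p -> is_pmf q -> p <> q ->
  exists M : nat, (1 <= M)%N /\
    forall (d : measure_display) (Omega : measurableType d)
      (P : probability Omega R) (X : nat -> Omega -> T) (U : nat -> Omega -> R),
      (forall i, (i <= M)%N -> forall A : set T, measurable (X i @^-1` A)) ->
      (forall i, (i <= M)%N -> measurable_fun setT (U i)) ->
      has_pmf_law P (X 0%N) q ->
      (forall j, (1 <= j <= M)%N -> has_pmf_law P (X j) p) ->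
      (forall i, (i <= M)%N -> is_uniform01 P (U i)) ->
      mutually_independent P M X U ->
      exists k : nat, (k <= M)%N /\
        P [set w | rank_stat lt M X U w = k] <> ((M.+1)%:R^-1)%:E.
Proof.
move=> [lt_irr _ _] p_pmf q_pmf pq; have [[p_ge0 _] [q_ge0 _]] := (p_pmf, q_pmf).
have [x0 p_lt_q] := pmf_neq_exists_lt p_pmf q_pmf pq.
set M := (Num.truncn ((2 + 128 / (q x0 - p x0) ^+ 2) / (q x0 - p x0))).+1.
exists M; split => // d Omega P X U X_meas U_meas X0_law Xj_law _ indep.
apply: contrapT => all_uniform.
suff uniform k : (k <= M)%N -> P [set w | rank_stat lt M X U w = k] = ((M.+1)%:R^-1)%:E.
  have := uniform_rank_sample_bound lt_irr p_ge0 q_ge0 (ltn0Sn _) X_meas U_meas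
            X0_law Xj_law indep p_lt_q uniform.
  by rewrite /M leNgt truncnS_gt.
by move=> kM; apply: contrapT => neq; apply: all_uniform; exists k.
Qed.
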